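(* If $\bar x\in\operatorname{dom}\varphi$ is a local minimizer of $\varphi:\mathbb{R}^n\to(-\infty,\infty]$, then $0\in\partial\varphi(\bar x)$. If in addition $\varphi$ is prox-regular at $\bar x$ for $0$, then $$\langle z,w\rangle\ge0\quad\text{whenever } w\in\mathbb{R}^n \text{ and } z\in\breve\partial^2\varphi(\bar x,0)(w).$$
   Context: Regular subdifferential $\widehat\partial\varphi(x):=\{v:\liminf_{u\to x}\frac{\varphi(u)-\varphi(x)-\langle v,u-x\rangle}{\|u-x\|}\ge0\}$; limiting subdifferential $\partial\varphi(\bar x)$: all limits of $v_k\in\widehat\partial\varphi(x_k)$ with $x_k\to\bar x$, $\varphi(x_k)\to\varphi(\bar x)$. Regular normal cone $\widehat N_\Omega(\bar z):=\widehat\partial\delta_\Omega(\bar z)$ ($\delta_\Omega$ the indicator function). Regular coderivative of $F:\mathbb{R}^n\rightrightarrows\mathbb{R}^m$: $\widehat D^*F(\bar x,\bar y)(u):=\{v:(v,-u)\in\widehat N_{\operatorname{gph}F}(\bar x,\bar y)\}$. Combined second-order subdifferential: $\breve\partial^2\varphi(\bar x,\bar v)(u):=\widehat D^*(\partial\varphi)(\bar x,\bar v)(u)$. Prox-regularity of $\varphi$ at $\bar x$ for $\bar v\in\partial\varphi(\bar x)$: $\varphi$ finite and locally l.s.c. around $\bar x$, and there are $\varepsilon>0$, $r\ge0$ with $\varphi(x)\ge\varphi(u)+\langle v,x-u\rangle-\frac r2\|x-u\|^2$ for all $\|x-\bar x\|<\varepsilon$ and all $v\in\partial\varphi(u)$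 with $\|v-\bar v\|<\varepsilon$, $\|u-\bar x\|<\varepsilon$, $\varphi(u)<\varphi(\bar x)+\varepsilon$. *)

From HB Require Import structures.
From mathcomp Require Import all_boot all_order all_algebra.
From mathcomp Require Import boolp classical_sets reals constructive_ereal.
Set Implicit Arguments. Unset Strict Implicit. Unset Printing Implicit Defensive.
Import Order.TTheory GRing.Theory Num.Theory.
Local Open Scope ring_scope.
Local Open Scope classical_set_scope.

Section VarAnal.
Variable R : realType.

Definition dotv {n : nat} (u v : 'rV[R]_n) : R := \sum_(i < n) u 0 i * v 0 i.
Definition enorm {n : nat} (u : 'rV[R]_n) : R := Num.sqrt (dotv u u).

Definition cvgv {n : nat} (s : nat -> 'rV[R]_n) (a : 'rV[R]_n) : Prop :=
  forall eps : R, 0 < eps -> exists N : nat, forall k, (N <= k)%N ->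
    enorm (s k - a) < eps.

(* regular (Fréchet) subdifferential: v \in \hat\partial phi(x), the liminf
   condition written out in epsilon-delta form (phi(x) finite). *)
Definition reg_subdiff {n : nat} (phi : 'rV[R]_n -> \bar R) (x v : 'rV[R]_n) : Prop :=
  phi x \is a fin_num /\
  forall eps : R, 0 < eps -> exists delta : R, 0 < delta /\
    forall u, 0 < enorm (u - x) < delta ->
      (phi x + (dotv v (u - x) - eps * enorm (u - x))%:E <= phi u)%E.

Definition lim_subdiff {n : nat} (phi : 'rV[R]_n -> \bar R) (xbar v : 'rV[R]_n) : Prop :=
  phi xbar \is a fin_num /\
  exists (xs vs : nat -> 'rV[R]_n),
    (forall k, reg_subdiff phi (xs k) (vs k)) /\
    cvgv xs xbar /\ cvgv vs v /\
    (forall eps : R, 0 < eps -> exists N : nat, forall k, (N <= k)%N ->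
       (`| phi (xs k) - phi xbar | < eps%:E)%E).

Definition indic {n : nat} (O : set 'rV[R]_n) (z : 'rV[R]_n) : \bar R :=
  if z \in O then 0%E else +oo%E.

Definition reg_normal {n : nat} (O : set 'rV[R]_n) (z v : 'rV[R]_n) : Prop :=
  reg_subdiff (indic O) z v.

Definition gph {n m : nat} (F : 'rV[R]_n -> set 'rV[R]_m) : set 'rV[R]_(n + m) :=
  [set z | exists x y, z = row_mx x y /\ F x y].

Definition reg_coderiv {n m : nat} (F : 'rV[R]_n -> set 'rV[R]_m)
    (xbar : 'rV[R]_n) (ybar u : 'rV[R]_m) (v : 'rV[R]_n) : Prop :=
  reg_normal (gph F) (row_mx xbar ybar) (row_mx v (- u)).

Definition comb_subdiff2 {n : nat} (phi : 'rV[R]_n -> \bar R)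
    (xbar vbar u z : 'rV[R]_n) : Prop :=
  reg_coderiv (fun x => [set v | lim_subdiff phi x v]) xbar vbar u z.

Definition lsc_at {n : nat} (phi : 'rV[R]_n -> \bar R) (x : 'rV[R]_n) : Prop :=
  forall a : R, (a%:E < phi x)%E -> exists delta : R, 0 < delta /\
    forall u, enorm (u - x) < delta -> (a%:E < phi u)%E.

Definition local_minimizer {n : nat} (phi : 'rV[R]_n -> \bar R) (xbar : 'rV[R]_n) : Prop :=
  exists delta : R, 0 < delta /\
    forall x, enorm (x - xbar) < delta -> (phi xbar <= phi x)%E.

Definition prox_regular {n : nat} (phi : 'rV[R]_n -> \bar R) (xbar vbar : 'rV[R]_n) : Prop :=
  phi xbar \is a fin_num /\
  (exists eps : R, 0 < eps /\ forall x, enorm (x - xbar) < eps -> lsc_at phi x) /\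
  lim_subdiff phi xbar vbar /\
  exists (eps r : R), 0 < eps /\ 0 <= r /\
    forall x u v,
      enorm (x - xbar) < eps ->
      lim_subdiff phi u v -> enorm (v - vbar) < eps -> enorm (u - xbar) < eps ->
      (phi u < phi xbar + eps%:E)%E ->
      (phi u + (dotv v (x - u) - r / 2 * enorm (x - u) ^+ 2)%:E <= phi x)%E.

End VarAnal.

(* Suppose <z, w> < 0 and choose lam > 0 with c := - <z, w + lam z> > 0.  Move the centre y of
   the proximal problem  min_x phi x + |x - y|^2 / (2 lam)  (over a small compact box around xbar)
   from xbar in equal steps along -(w + lam z).  The proximal points u stay close to xbar and the
   proximal gradients v = (y - u) / lam are regular subgradients of phi at u, so (u, v) lies in the
   graph of the limiting subdifferential near (xbar, 0).  The normal-cone inequality defining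
   z \in \breve\partial^2 phi(xbar, 0)(w) then forces <w + lam z, v> >= t c / 2 at distance t from
   xbar; hence the optimal value decreases quadratically along the path and eventually drops below
   phi xbar, contradicting local minimality. *)

From HB Require Import structures.
From mathcomp Require Import all_boot all_order all_algebra.
From mathcomp Require Import boolp classical_sets reals constructive_ereal.
From mathcomp Require Import topology normedtype ereal matrix_normedtype.
From mathcomp Require Import ring lra.
Import numFieldNormedType.Exports.
Import Order.TTheory GRing.Theory Num.Theory.
Set Implicit Arguments. Unset Strict Implicit. Unset Printing Implicit Defensive.
Local Open Scope ring_scope.

Section InnerProduct.
Variables (R : realType) (n : nat).
Implicit Types u v w : 'rV[R]_n.

Lemma dotvC u v : dotv u v = dotv v u.
Proof. by apply: eq_bigr => i _; rewrite mulrC. Qed.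

Lemma dotvDl u u' v : dotv (u + u') v = dotv u v + dotv u' v.
Proof. by rewrite /dotv -big_split; apply: eq_bigr => i _; rewrite mxE mulrDl. Qed.

Lemma dotvNl u v : dotv (- u) v = - dotv u v.
Proof. by rewrite /dotv -sumrN; apply: eq_bigr => i _; rewrite mxE mulNr. Qed.

Lemma dotvZl a u v : dotv (a *: u) v = a * dotv u v.
Proof. by rewrite /dotv mulr_sumr; apply: eq_bigr => i _; rewrite mxE mulrA. Qed.

Lemma dotvDr u v v' : dotv u (v + v') = dotv u v + dotv u v'.
Proof. by rewrite dotvC dotvDl !(dotvC u). Qed.

Lemma dotvNr u v : dotv u (- v) = - dotv u v.
Proof. by rewrite dotvC dotvNl dotvC. Qed.

Lemma dotvZr a u v : dotv u (a *: v) = a * dotv u v.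
Proof. by rewrite dotvC dotvZl dotvC. Qed.

Lemma dotvBr u v v' : dotv u (v - v') = dotv u v - dotv u v'.
Proof. by rewrite dotvDr dotvNr. Qed.

Lemma dotv0l v : dotv 0 v = 0.
Proof. by rewrite /dotv big1 // => i _; rewrite mxE mul0r. Qed.

Lemma dotvv_ge0 u : 0 <= dotv u u.
Proof. by apply: sumr_ge0 => i _; rewrite -expr2 sqr_ge0. Qed.

Lemma enorm_ge0 u : 0 <= enorm u.
Proof. exact: sqrtr_ge0. Qed.

Lemma enorm_sqr u : enorm u ^+ 2 = dotv u u.
Proof. by rewrite sqr_sqrtr // dotvv_ge0. Qed.

Lemma enorm0 : enorm (0 : 'rV[R]_n) = 0.
Proof. by rewrite /enorm dotv0l sqrtr0. Qed.

Lemma enormN u : enorm (- u) = enorm u.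
Proof. by rewrite /enorm dotvNl dotvNr opprK. Qed.

Lemma enormZ a u : enorm (a *: u) = `|a| * enorm u.
Proof. by rewrite /enorm dotvZl dotvZr mulrA -expr2 sqrtrM ?sqr_ge0 // sqrtr_sqr. Qed.

Lemma enorm_distC u v : enorm (u - v) = enorm (v - u).
Proof. by rewrite -enormN opprB. Qed.

Lemma quadratic_ge0_discr (A B C : R) :
  0 <= C -> (forall t, 0 <= A - 2 * t * B + t ^+ 2 * C) -> B ^+ 2 <= A * C.
Proof.
move=> C_ge0 q_ge0; have A_ge0 : 0 <= A by have := q_ge0 0; lra.
have [C0|C_neq0] := eqVneq C 0.
  have [B0|B_neq0] := eqVneq B 0; first by rewrite B0 C0; nra.
  have := q_ge0 ((A + 1) / (2 * B)); rewrite C0 mulr0 addr0.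
  have -> : 2 * ((A + 1) / (2 * B)) * B = A + 1 by field; rewrite B_neq0.
  lra.
have C_gt0 : 0 < C by rewrite lt0r C_neq0.
have := q_ge0 (B / C).
have -> : A - 2 * (B / C) * B + (B / C) ^+ 2 * C = A - B ^+ 2 / C by field.
by rewrite subr_ge0 ler_pdivrMr.
Qed.

Lemma cauchy_schwarz u v : dotv u v <= enorm u * enorm v.
Proof.
have : dotv u v ^+ 2 <= dotv u u * dotv v v.
  apply: quadratic_ge0_discr => [|t]; first exact: dotvv_ge0.
  have := dotvv_ge0 (u - t *: v).
  rewrite !dotvBr !dotvDl !dotvNl !dotvZl !dotvZr (dotvC v u); lra.
move/ler_wsqrtr; rewrite sqrtr_sqr sqrtrM ?dotvv_ge0 //.
exact: le_trans (ler_norm _).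
Qed.

Lemma enormD_sqr u v : enorm (u + v) ^+ 2 = enorm u ^+ 2 + 2 * dotv u v + enorm v ^+ 2.
Proof. by rewrite !enorm_sqr !dotvDl !dotvDr (dotvC v u); ring. Qed.

Lemma ler_enormD u v : enorm (u + v) <= enorm u + enorm v.
Proof.
have := cauchy_schwarz u v; have := enormD_sqr u v.
have := enorm_ge0 u; have := enorm_ge0 v; have := enorm_ge0 (u + v) => *.
have : enorm (u + v) ^+ 2 <= (enorm u + enorm v) ^+ 2 by nra.
by rewrite ler_pXn2r // nnegrE; lra.
Qed.

Lemma ler_coord_enorm u i : `|u 0 i| <= enorm u.
Proof.
rewrite /enorm -(sqrtr_sqr (u 0 i)); apply: ler_wsqrtr.
rewrite /dotv (bigD1 i) //= -expr2 lerDl.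
by apply: sumr_ge0 => j _; rewrite -expr2 sqr_ge0.
Qed.

Lemma enorm_lt_coord u d : 0 < d -> (forall i, `|u 0 i| <= d / (n%:R + 1)) -> enorm u < d.
Proof.
move=> d_gt0 u_le; have n_ge0 : (0 : R) <= n%:R by [].
set e := d / (n%:R + 1) in u_le.
have e_gt0 : 0 < e by apply: divr_gt0 => //; lra.
have -> : d = e * (n%:R + 1) by rewrite /e mulfVK //; lra.
clearbody e.
have u_sqr : enorm u ^+ 2 <= n%:R * e ^+ 2.
  have -> : n%:R * e ^+ 2 = \sum_(i < n) e ^+ 2 by rewrite sumr_const card_ord mulr_natl.
  rewrite enorm_sqr /dotv.
  apply: ler_sum => i _; rewrite -expr2 -real_normK ?num_real //.
  by rewrite ler_pXn2r ?nnegrE // (le_trans _ (u_le i)).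
have e_sqr : n%:R * e ^+ 2 < (e * (n%:R + 1)) ^+ 2.
  by rewrite exprMn mulrC ltr_pM2l ?exprn_gt0 //; nra.
rewrite -(ltr_pXn2r (_ : (0 < 2)%N)) ?nnegrE ?enorm_ge0 //; last by apply: mulr_ge0; lra.
exact: le_lt_trans e_sqr.
Qed.

End InnerProduct.

Section RowBlocks.
Variables (R : realType) (m k : nat).
Implicit Types (u : 'rV[R]_m) (v : 'rV[R]_k).

Lemma dotv_row_mx u v (u' : 'rV[R]_m) (v' : 'rV[R]_k) :
  dotv (row_mx u v) (row_mx u' v') = dotv u u' + dotv v v'.
Proof.
rewrite /dotv big_split_ord /=; congr (_ + _); apply: eq_bigr => i _.
  by rewrite !row_mxEl.
by rewrite !row_mxEr.
Qed.

Lemma ler_enorm_row_mx u v : enorm (row_mx u v) <= enorm u + enorm v.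
Proof.
have := enorm_ge0 u; have := enorm_ge0 v; have := enorm_ge0 (row_mx u v).
have : enorm (row_mx u v) ^+ 2 = enorm u ^+ 2 + enorm v ^+ 2 by rewrite !enorm_sqr dotv_row_mx.
move=> *; have : enorm (row_mx u v) ^+ 2 <= (enorm u + enorm v) ^+ 2 by nra.
by rewrite ler_pXn2r // nnegrE; lra.
Qed.

End RowBlocks.

Section Semicontinuity.
Variables (R : realType) (n : nat).
Implicit Types (f : 'rV[R]_n -> \bar R) (x y p : 'rV[R]_n).
Local Open Scope classical_set_scope.

Lemma lsc_at_nbhs f p : lsc_at f p ->
  forall a : R, (a%:E < f p)%E -> \forall x \near p, (a%:E < f x)%E.
Proof.
move=> f_lsc a a_lt; have [d [d_gt0 f_gt]] := f_lsc a a_lt.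
have e_gt0 : 0 < d / (n%:R + 1) by apply: divr_gt0 => //; have : (0 : R) <= n%:R by []; lra.
apply/nbhs_ballP; exists (d / (n%:R + 1)) => // x [_ x_near]; apply: f_gt.
apply: enorm_lt_coord => // i; rewrite !mxE distrC.
by have := x_near 0 i; rewrite /ball /= => /ltW.
Qed.

Lemma lsc_atDr f (g : 'rV[R]_n -> R) p : lsc_at f p ->
  (forall e, 0 < e -> exists2 d, 0 < d & forall x, enorm (x - p) < d -> g p - e < g x) ->
  lsc_at (fun x => (f x + (g x)%:E)%E) p.
Proof.
move=> f_lsc g_lsc a a_lt.
have [e [b [e_gt0 b_lt ->]]] : exists e b : R, [/\ 0 < e, (b%:E < f p)%E & a = b + g p - e].
  move: a_lt; case: (f p) => [r| |] //= a_lt.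
    rewrite -EFinD lte_fin in a_lt.
    by exists ((r + g p - a) / 2), (r - (r + g p - a) / 2); rewrite lte_fin; split; lra.
  by exists 1, (a - g p + 1); split; rewrite ?ltry //; lra.
have [d1 [d1_gt0 f_gt]] := f_lsc b b_lt.
have [d2 d2_gt0 g_gt] := g_lsc e e_gt0.
exists (Num.min d1 d2); split => [|x]; first by rewrite lt_min d1_gt0 d2_gt0.
rewrite lt_min => /andP[/f_gt fx_gt /g_gt gx_gt].
move: fx_gt; case: (f x) => [r| |] //= r_gt; last by rewrite ltry.
by rewrite -EFinD lte_fin; rewrite lte_fin in r_gt; lra.
Qed.

Lemma sqr_dist_lsc y p (k : R) : 0 < k -> forall e, 0 < e ->
  exists2 d, 0 < d & forall x, enorm (x - p) < d ->
    enorm (p - y) ^+ 2 / k - e < enorm (x - y) ^+ 2 / k.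
Proof.
move=> k_gt0 e e_gt0; have py_ge0 := enorm_ge0 (p - y).
exists (e * k / (2 * (enorm (p - y) + 1))) => [|x]; first by apply: divr_gt0; nra.
rewrite ltr_pdivlMr; last lra.
move=> x_near; have xp_ge0 := enorm_ge0 (x - p).
have : enorm (p - y) ^+ 2 - 2 * (enorm (x - p) * enorm (p - y)) <= enorm (x - y) ^+ 2.
  have -> : x - y = (x - p) + (p - y) by rewrite addrA subrK.
  rewrite (enormD_sqr (x - p)); have := cauchy_schwarz (- (x - p)) (p - y).
  by rewrite enormN dotvNl; have := sqr_ge0 (enorm (x - p)); lra.
rewrite ltr_pdivlMr // mulrBl mulfVK; last by rewrite gt_eqF.
nra.
Qed.

Lemma compact_sublevel_cluster (K : set 'rV[R]_n) f (m : R) : compact K ->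
  (forall k : nat, exists x, K x /\ (f x < (m + k.+1%:R^-1)%:E)%E) ->
  exists2 p, K p & forall k (A : set 'rV[R]_n), nbhs p A ->
    exists x, (f x < (m + k.+1%:R^-1)%:E)%E /\ A x.
Proof.
move=> K_compact sublevel_nonempty.
pose B k := K `&` [set x | (f x < (m + k.+1%:R^-1)%:E)%E].
have F_proper : ProperFilter (filter_from [set: nat] B).
  apply: filter_from_proper; last first.
    by move=> k _; have [x [Kx fx]] := sublevel_nonempty k; exists x.
  apply: filter_from_filter; first by exists 0%N.
  move=> i j _ _; exists (maxn i j) => // x [Kx fx].
  have fx_lt l : (l <= maxn i j)%N -> (f x < (m + l.+1%:R^-1)%:E)%E.
    move=> l_le; apply: lt_le_trans fx _.
    by rewrite lee_fin lerD2l lef_pV2 ?posrE ?ler_nat.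
  by split; split => //; apply: fx_lt; rewrite ?leq_maxl ?leq_maxr.
have [p [Kp p_clust]] := K_compact _ F_proper (ex_intro2 _ _ 0%N I (fun _ => @proj1 _ _)).
exists p => // k A pA.
by have [x [[_ fx] Ax]] := p_clust _ _ (ex_intro2 _ _ k I (fun _ => id)) pA; exists x.
Qed.

Lemma compact_lsc_attains_min (K : set 'rV[R]_n) f x0 (L : R) :
  compact K -> K x0 -> (f x0 < +oo)%E -> (forall x, K x -> (L%:E <= f x)%E) ->
  (forall p, K p -> lsc_at f p) -> exists2 u, K u & forall x, K x -> (f u <= f x)%E.
Proof.
move=> K_compact Kx0 fx0_lt f_ge f_lsc.
set m := ereal_inf (f @` K).
have m_le x : K x -> (m <= f x)%E by move=> Kx; apply: ereal_inf_lbound; exists x.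
have L_le_m : (L%:E <= m)%E by apply/ereal_infP => _ [x Kx <-]; exact: f_ge.
have m_fin : m \is a fin_num.
  rewrite fin_numE; apply/andP; split; apply/negP => /eqP m_inf.
    by rewrite m_inf in L_le_m.
  by have := m_le _ Kx0; rewrite m_inf leye_eq => /eqP fx0; rewrite fx0 ltxx in fx0_lt.
have mE : m = (fine m)%:E by rewrite fineK.
have [p Kp p_clust] : exists2 p, K p & forall k (A : set 'rV[R]_n), nbhs p A ->
    exists x, (f x < (fine m + k.+1%:R^-1)%:E)%E /\ A x.
  apply: compact_sublevel_cluster => // k.
  have : (m < (fine m + k.+1%:R^-1)%:E)%E by rewrite {1}mE lte_fin ltrDl.
  by move/ereal_inf_lt => [_ [x Kx <-] fx]; exists x.
exists p => // x Kx; apply: le_trans (m_le x Kx); rewrite leNgt; apply/negP => m_lt.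
have [a [m_lt_a a_lt]] : exists a : R, (m < a%:E)%E /\ (a%:E < f p)%E.
  have := f_ge _ Kp; case: (f p) m_lt => [r| |] //= m_lt _.
    by exists ((fine m + r) / 2); rewrite mE !lte_fin in m_lt *; split; lra.
  by exists (fine m + 1); rewrite mE lte_fin ltey; split => //; lra.
have [k k_lt] : exists k : nat, fine m + k.+1%:R^-1 < a.
  by apply: ltr_add_invr; rewrite -lte_fin -mE.
have [y [fy_lt fy_gt]] := p_clust k _ (lsc_at_nbhs (f_lsc p Kp) a_lt).
have k_lt' : ((fine m + k.+1%:R^-1)%:E < a%:E)%E by rewrite lte_fin.
by have := lt_trans fy_lt (lt_trans k_lt' fy_gt); rewrite ltxx.
Qed.

End Semicontinuity.

Definition prox_objective (R : realType) (n : nat) (phi : 'rV[R]_n -> \bar R) (lam : R)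
    (y x : 'rV[R]_n) : \bar R :=
  (phi x + (enorm (x - y) ^+ 2 / (2 * lam))%:E)%E.

Definition gph_subdiff_normal_ineq (R : realType) (n : nat) (phi : 'rV[R]_n -> \bar R)
    (xbar z w : 'rV[R]_n) (eta r : R) : Prop :=
  forall u v, lim_subdiff phi u v -> enorm (u - xbar) + enorm v < r ->
    dotv z (u - xbar) - dotv w v <= eta * (enorm (u - xbar) + enorm v).

Section Subdifferentials.
Variables (R : realType) (n : nat) (phi : 'rV[R]_n -> \bar R).
Implicit Types (x y u v w z : 'rV[R]_n).
Local Open Scope classical_set_scope.

Lemma reg_subdiff_lim_subdiff u v : reg_subdiff phi u v -> lim_subdiff phi u v.
Proof.
move=> [u_fin u_reg]; split => //; exists (fun=> u), (fun=> v); split => //.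
split; first by move=> e e_gt0; exists 0%N => k _; rewrite subrr enorm0.
split; first by move=> e e_gt0; exists 0%N => k _; rewrite subrr enorm0.
by move=> e e_gt0; exists 0%N => k _; rewrite subee // abse0 lte_fin.
Qed.

Lemma local_minimizer_reg_subdiff0 xbar :
  phi xbar \is a fin_num -> local_minimizer phi xbar -> reg_subdiff phi xbar 0.
Proof.
move=> xbar_fin [d [d_gt0 xbar_min]]; split => // e e_gt0.
exists d; split => // u /andP[_ /xbar_min]; apply: le_trans.
rewrite dotv0l sub0r -(fineK xbar_fin) -EFinD lee_fin.
by have := enorm_ge0 (u - xbar); nra.
Qed.

Lemma comb_subdiff2_normal_ineq xbar w z : comb_subdiff2 phi xbar 0 w z ->
  forall eta, 0 < eta -> exists2 r, 0 < r & gph_subdiff_normal_ineq phi xbar z w eta r.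
Proof.
move=> [xbar_gph z_normal] eta eta_gt0.
have [r [r_gt0 z_ineq]] := z_normal eta eta_gt0.
exists r => // u v uv_lim uv_near.
set G := gph (fun x => [set v | lim_subdiff phi x v]).
have Guv : indic G (row_mx u v) = 0%E by rewrite /indic mem_set //; exists u, v.
have Gxbar : indic G (row_mx xbar 0) = 0%E by move: xbar_gph; rewrite /indic; case: ifP.
have -> : dotv z (u - xbar) - dotv w v = dotv (row_mx z (- w)) (row_mx (u - xbar) v).
  by rewrite dotv_row_mx dotvNl.
have d_ge0 := enorm_ge0 (row_mx (u - xbar) v).
have d_le := ler_enorm_row_mx (u - xbar) v.
have [d0|d_neq0] := eqVneq (enorm (row_mx (u - xbar) v)) 0.
  apply: le_trans (cauchy_schwarz _ _) _; rewrite d0 mulr0.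
  by apply: mulr_ge0; [exact: ltW | apply: addr_ge0; exact: enorm_ge0].
have := z_ineq (row_mx u v).
rewrite opp_row_mx add_row_mx oppr0 addr0 Guv Gxbar add0e lee_fin.
have -> : 0 < enorm (row_mx (u - xbar) v) < r by rewrite lt0r d_neq0 d_ge0; lra.
by move=> /(_ isT); rewrite subr_le0 => /le_trans; apply; rewrite ler_pM2l.
Qed.

Lemma prox_min_reg_subdiff lam y u s : 0 < lam -> 0 < s -> phi u \is a fin_num ->
  (forall x, enorm (x - u) < s -> (prox_objective phi lam y u <= prox_objective phi lam y x)%E) ->
  reg_subdiff phi u (lam^-1 *: (y - u)).
Proof.
move=> lam_gt0 s_gt0 u_fin u_min; split => // e e_gt0.
exists (Num.min s (2 * lam * e)); split => [|x /andP[_]].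
  by rewrite lt_min s_gt0 !mulr_gt0.
rewrite lt_min => /andP[/u_min + xu_small]; rewrite /prox_objective -(fineK u_fin).
case: (phi x) => [px | _ | ]; [| by rewrite leey | by rewrite /= -EFinD leeNy_eq].
rewrite -!EFinD !lee_fin.
have -> : x - y = (x - u) + (u - y) by rewrite addrA subrK.
rewrite (enormD_sqr (x - u) (u - y)).
have -> : dotv (lam^-1 *: (y - u)) (x - u) = - lam^-1 * dotv (x - u) (u - y).
  by rewrite dotvZl dotvC -(opprB u y) dotvNr mulrN mulNr.
have xu_ge0 := enorm_ge0 (x - u).
have : enorm (x - u) ^+ 2 / (2 * lam) <= e * enorm (x - u).
  by rewrite ler_pdivrMr ?mulr_gt0 //; nra.
have -> : (enorm (x - u) ^+ 2 + 2 * dotv (x - u) (u - y) + enorm (u - y) ^+ 2) / (2 * lam)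
  = enorm (x - u) ^+ 2 / (2 * lam) + lam^-1 * dotv (x - u) (u - y) + enorm (u - y) ^+ 2 / (2 * lam).
  by field; rewrite gt_eqF.
lra.
Qed.

End Subdifferentials.

Section ProxDescent.
Variables (R : realType) (n : nat) (phi : 'rV[R]_n -> \bar R) (xbar : 'rV[R]_n) (delta lam : R).
Hypothesis phi_neqNy : forall x, phi x != -oo%E.
Hypothesis phi_xbar_fin : phi xbar \is a fin_num.
Hypothesis delta_gt0 : 0 < delta.
Hypothesis xbar_min : forall x, enorm (x - xbar) < delta -> (phi xbar <= phi x)%E.
Hypothesis phi_lsc : forall x, enorm (x - xbar) < delta -> lsc_at phi x.
Hypothesis lam_gt0 : 0 < lam.
Local Open Scope classical_set_scope.

Let rho := delta / (n%:R + 1).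
(* A coordinate box rather than a ball, so that [rV_compact] applies; it contains the closed
   rho-ball around xbar and lies in the open delta-ball. *)
Let K := [set v : 'rV[R]_n | forall i, v ord0 i \in `[xbar ord0 i - rho, xbar ord0 i + rho]%R].
Let e := prox_objective phi lam.
Let K_minimizer y u := K u /\ forall x, K x -> (e y u <= e y x)%E.

Lemma rho_gt0 : 0 < rho.
Proof. by apply: divr_gt0 => //; have : (0 : R) <= n%:R by []; lra. Qed.

Lemma K_compact : compact K.
Proof.
have := @rV_compact R n (fun i => `[xbar ord0 i - rho, xbar ord0 i + rho]%classic)
  (fun i => @segment_compact R (xbar ord0 i - rho) (xbar ord0 i + rho)).
exact.
Qed.

Lemma K_ball v : K v -> enorm (v - xbar) < delta.
Proof.
move=> Kv; apply: enorm_lt_coord => // i; rewrite !mxE -[0 : 'I_1]/ord0.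
by have := Kv i; rewrite in_itv /= ler_norml -/rho => /andP[? ?]; apply/andP; split; lra.
Qed.

Lemma ball_K v : enorm (v - xbar) <= rho -> K v.
Proof.
move=> v_near i; have := le_trans (ler_coord_enorm (v - xbar) i) v_near.
by rewrite !mxE -[0 : 'I_1]/ord0 ler_norml in_itv /= => /andP[? ?]; apply/andP; split; lra.
Qed.

Lemma prox_objective_ge y u : K u -> (phi xbar <= e y u)%E.
Proof.
move=> /K_ball /xbar_min /le_trans; apply; apply: leeDl.
by rewrite lee_fin divr_ge0 ?sqr_ge0 // mulr_ge0 // (ltW lam_gt0).
Qed.

Lemma xbar_K : K xbar.
Proof. by apply: ball_K; rewrite subrr enorm0 (ltW rho_gt0). Qed.

Lemma exists_K_minimizer y : exists u, K_minimizer y u.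
Proof.
have [u Ku u_min] : exists2 u, K u & forall x, K x -> (e y u <= e y x)%E.
  apply: (compact_lsc_attains_min (L := fine (phi xbar)) K_compact xbar_K).
  - by rewrite /e /prox_objective -(fineK phi_xbar_fin) -EFinD ltry.
  - by move=> x Kx; rewrite fineK //; exact: prox_objective_ge.
  - move=> p /K_ball /phi_lsc p_lsc; apply: lsc_atDr => // eps.
    by apply: sqr_dist_lsc; rewrite mulr_gt0.
by exists u.
Qed.

Lemma K_minimizer_props y u : enorm (y - xbar) < rho / 4 -> K_minimizer y u ->
  [/\ enorm (u - xbar) <= 2 * enorm (y - xbar), enorm (y - u) <= enorm (y - xbar)
    & reg_subdiff phi u (lam^-1 *: (y - u))].
Proof.
move=> y_near [Ku u_min].
have u_fin : phi u \is a fin_num.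
  rewrite fin_numE phi_neqNy /=; apply/negP => /eqP u_inf.
  have := u_min _ xbar_K; rewrite /e /prox_objective u_inf /=.
  by rewrite -(fineK phi_xbar_fin) -EFinD leye_eq.
have := u_min _ xbar_K; have := xbar_min (K_ball Ku).
rewrite /e /prox_objective -(fineK phi_xbar_fin) -(fineK u_fin) -!EFinD !lee_fin => u_ge u_le.
have uy_le : enorm (y - u) <= enorm (y - xbar).
  rewrite -(ler_pXn2r (_ : (0 < 2)%N)) ?nnegrE ?enorm_ge0 // (enorm_distC y) (enorm_distC y).
  by rewrite -(ler_pM2r (_ : 0 < (2 * lam)^-1)) ?invr_gt0 ?mulr_gt0 //; lra.
have ux_le : enorm (u - xbar) <= 2 * enorm (y - xbar).
  have -> : u - xbar = (u - y) + (y - xbar) by rewrite addrA subrK.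
  by apply: le_trans (ler_enormD _ _) _; rewrite enorm_distC; lra.
split => //; apply: (prox_min_reg_subdiff (s := rho / 2)) => //; first by rewrite divr_gt0 ?rho_gt0.
move=> x xu_near; apply: u_min; apply: ball_K.
have -> : x - xbar = (x - u) + (u - xbar) by rewrite addrA subrK.
by apply: le_trans (ler_enormD _ _) _; lra.
Qed.

Section Path.
Variables (z w : 'rV[R]_n) (eta r tau : R) (N : nat).
Let dir := w + lam *: z.
Let c := - dotv z dir.
Let C := enorm dir * (2 + lam^-1).
Let A := enorm dir ^+ 2 / (2 * lam).
Hypothesis eta_ge0 : 0 <= eta.
Hypothesis eta_C : eta * C <= c / 2.
Hypothesis graph_ineq : gph_subdiff_normal_ineq phi xbar z w eta r.
Hypothesis tau_gt0 : 0 < tau.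
Hypothesis tau_small_rho : N%:R * tau * enorm dir < rho / 4.
Hypothesis tau_small_r : N%:R * tau * C < r.

Let y (k : nat) := xbar - (k%:R * tau) *: dir.

Lemma enorm_path k : enorm (y k - xbar) = k%:R * tau * enorm dir.
Proof. by rewrite /y addrAC subrr add0r enormN enormZ ger0_norm // mulr_ge0 // (ltW tau_gt0). Qed.

Lemma subgrad_dir_ge k u : (k <= N)%N -> K_minimizer (y k) u ->
  k%:R * tau * (c / 2) <= dotv dir (lam^-1 *: (y k - u)).
Proof.
move=> k_le u_min; set v := lam^-1 *: (y k - u).
have dir_ge0 := enorm_ge0 dir; have lamV_gt0 : 0 < lam^-1 by rewrite invr_gt0.
have kt_ge0 : 0 <= k%:R * tau by rewrite mulr_ge0 // (ltW tau_gt0).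
have kt_le : k%:R * tau <= N%:R * tau by rewrite ler_pM2r // ler_nat.
have y_near : enorm (y k - xbar) < rho / 4.
  by rewrite enorm_path; apply: le_lt_trans tau_small_rho; exact: ler_wpM2r.
have [ux_le yu_le v_reg] := K_minimizer_props y_near u_min.
rewrite enorm_path in ux_le yu_le.
have v_le : enorm v <= lam^-1 * (k%:R * tau * enorm dir).
  by rewrite /v enormZ (ger0_norm (ltW lamV_gt0)) ler_pM2l.
have C_ge0 : 0 <= C by rewrite mulr_ge0 // addr_ge0 // (ltW lamV_gt0).
have near_le : enorm (u - xbar) + enorm v <= k%:R * tau * C.
  have -> : k%:R * tau * C = 2 * (k%:R * tau * enorm dir) + lam^-1 * (k%:R * tau * enorm dir).
    by rewrite /C; ring.
  lra.
have near_lt : enorm (u - xbar) + enorm v < r.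
  by apply: (le_lt_trans near_le); apply: le_lt_trans tau_small_r; exact: ler_wpM2r.
have := graph_ineq (reg_subdiff_lim_subdiff v_reg) near_lt.
have -> : dotv z (u - xbar) - dotv w v = k%:R * tau * c - dotv dir v.
  have -> : u - xbar = - ((k%:R * tau) *: dir) - lam *: v.
    rewrite /v scalerA mulfV ?gt_eqF // scale1r /y.
    by apply/rowP => i; rewrite !mxE; ring.
  by rewrite /c /dir dotvBr dotvNr !dotvZr !dotvDl dotvZl; ring.
have : eta * (enorm (u - xbar) + enorm v) <= k%:R * tau * (c / 2).
  apply: le_trans (_ : eta * (k%:R * tau * C) <= _); first exact: ler_wpM2l.
  by rewrite mulrCA ler_wpM2l.
lra.
Qed.

Lemma prox_descent_step k u : (k < N)%N -> K_minimizer (y k) u ->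
  exists u', K_minimizer (y k.+1) u' /\
    (e (y k.+1) u' <= e (y k) u + (tau ^+ 2 * A - tau * (k%:R * tau * (c / 2)))%:E)%E.
Proof.
move=> k_lt u_min; have [u' [Ku' u'_min]] := exists_K_minimizer (y k.+1).
exists u'; split => //; apply: le_trans (u'_min _ u_min.1) _.
set v := lam^-1 *: (y k - u).
have v_ge : tau * (k%:R * tau * (c / 2)) <= tau * dotv dir v.
  by rewrite ler_pM2l //; exact: subgrad_dir_ge (ltnW k_lt) u_min.
have u_y : u - y k = - (lam *: v) by rewrite scalerA mulfV ?scale1r ?opprB // gt_eqF.
rewrite /e /prox_objective -addeA -EFinD; apply: leeD2l; rewrite lee_fin.
have -> : u - y k.+1 = (u - y k) + tau *: dir.
  by apply/rowP => i; rewrite !mxE -natr1; ring.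
rewrite (enormD_sqr (u - y k)) [in dotv (u - y k) _]u_y dotvNl dotvZl dotvZr.
rewrite enormZ (ger0_norm (ltW tau_gt0)) (dotvC v dir).
have -> : (enorm (u - y k) ^+ 2 + 2 * - (lam * (tau * dotv dir v)) + (tau * enorm dir) ^+ 2)
    / (2 * lam) = enorm (u - y k) ^+ 2 / (2 * lam) + tau ^+ 2 * A - tau * dotv dir v.
  by rewrite /A; field; rewrite gt_eqF.
lra.
Qed.

Let bound (k : nat) :=
  fine (phi xbar) + tau ^+ 2 * (k%:R * A - c / 4 * (k%:R * (k%:R - 1))).

Lemma prox_path_bound k : (k <= N)%N ->
  exists u, K_minimizer (y k) u /\ (e (y k) u <= (bound k)%:E)%E.
Proof.
elim: k => [_|k IH k_lt].
  have [u u_min] := exists_K_minimizer (y 0); exists u; split => //.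
  apply: le_trans (u_min.2 _ xbar_K) _.
  rewrite /e /prox_objective /y /bound !mul0r scale0r subr0 subrr enorm0.
  by rewrite -(fineK phi_xbar_fin) -EFinD lee_fin expr0n /= !mul0r !mulr0 subrr mulr0.
have [u [u_min u_le]] := IH (ltnW k_lt).
have [u' [u'_min u'_le]] := prox_descent_step k_lt u_min.
exists u'; split => //; apply: le_trans u'_le _.
apply: le_trans (leeD u_le (lexx _)) _.
have -> : bound k.+1 = bound k + (tau ^+ 2 * A - tau * (k%:R * tau * (c / 2))).
  by rewrite /bound -natr1; field.
by rewrite EFinD.
Qed.

Lemma path_length_le : 0 < c -> N%:R <= 4 * A / c + 1.
Proof.
move=> c_gt0; rewrite leNgt; apply/negP => N_gt.
have A_ge0 : 0 <= A by rewrite divr_ge0 ?sqr_ge0 // mulr_ge0 // (ltW lam_gt0).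
have AC_ge0 : 0 <= 4 * A / c by apply: divr_ge0 (ltW c_gt0); lra.
have A_lt : 4 * A < c * (N%:R - 1).
  have : 4 * A / c < N%:R - 1 by lra.
  by rewrite ltr_pdivrMr // [c * _]mulrC.
have bound_lt0 : N%:R * A - c / 4 * (N%:R * (N%:R - 1)) < 0 by nra.
have [u [[Ku _] u_le]] := prox_path_bound (leqnn N).
have := le_trans (prox_objective_ge _ Ku) u_le.
rewrite -{1}(fineK phi_xbar_fin) lee_fin lerDl pmulr_rge0 ?exprn_gt0 //.
by move=> /le_lt_trans /(_ bound_lt0); rewrite ltxx.
Qed.

End Path.

Lemma graph_normal_dotv_ge0 z w :
  (forall eta, 0 < eta -> exists2 r, 0 < r & gph_subdiff_normal_ineq phi xbar z w eta r) ->
  0 <= dotv z (w + lam *: z).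
Proof.
move=> graph; rewrite leNgt; apply/negP => dir_lt0.
set c := - dotv z (w + lam *: z); have c_gt0 : 0 < c by rewrite oppr_gt0.
set Cw := enorm (w + lam *: z); have Cw_ge0 : 0 <= Cw := enorm_ge0 _.
have lamV_gt0 : 0 < lam^-1 by rewrite invr_gt0.
set C := Cw * (2 + lam^-1); have Cw_le_C : Cw <= C by rewrite /C; nra.
set A := Cw ^+ 2 / (2 * lam).
have A_ge0 : 0 <= A by rewrite divr_ge0 ?sqr_ge0 // mulr_ge0 // (ltW lam_gt0).
(* eta keeps the normal-cone error below half the descent rate, and tau is small enough for a
   path of N > 4 A / c + 1 steps to stay within rho / 4 and r. *)
set eta := c / (2 * (C + 1)).
have eta_gt0 : 0 < eta by rewrite divr_gt0 //; lra.
have eta_C : eta * C <= c / 2 by rewrite /eta mulrAC ler_pdivrMr; nra.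
have [r r_gt0 r_ineq] := graph eta eta_gt0.
set N := Num.bound (4 * A / c + 1).
have AC_ge0 : 0 <= 4 * A / c by apply: divr_ge0 (ltW c_gt0); lra.
have N_gt : 4 * A / c + 1 < N%:R by apply: archi_boundP; lra.
set m := Num.min (rho / 4) r; have m_gt0 : 0 < m by rewrite lt_min r_gt0 divr_gt0 ?rho_gt0.
set tau := m / ((N%:R + 1) * (C + 1)).
have tau_gt0 : 0 < tau by rewrite divr_gt0 // mulr_gt0 //; lra.
have N_tau : N%:R * tau * (C + 1) < m.
  have -> : N%:R * tau * (C + 1) = m * (N%:R / (N%:R + 1)).
    by rewrite /tau; field; rewrite !gt_eqF //; lra.
  by rewrite gtr_pMr // ltr_pdivrMr; lra.
have N_tau_le x : x <= C + 1 -> N%:R * tau * x < m.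
  by move=> x_le; apply: le_lt_trans N_tau; rewrite ler_wpM2l // mulr_ge0 // (ltW tau_gt0).
have tau_rho : N%:R * tau * Cw < rho / 4.
  by apply: lt_le_trans (N_tau_le _ _) _; [lra | rewrite ge_min lexx].
have tau_r : N%:R * tau * C < r.
  by apply: lt_le_trans (N_tau_le _ _) _; [lra | rewrite ge_min lexx orbT].
have := path_length_le (ltW eta_gt0) eta_C r_ineq tau_gt0 tau_rho tau_r c_gt0.
by rewrite leNgt N_gt.
Qed.

End ProxDescent.

Lemma local_minimizer_comb_subdiff2_ge0 (R : realType) (n : nat) (phi : 'rV[R]_n -> \bar R)
    (xbar w z : 'rV[R]_n) :
  (forall x, phi x != -oo%E) -> phi xbar \is a fin_num -> local_minimizer phi xbar ->
  (exists2 d, 0 < d & forall x, enorm (x - xbar) < d -> lsc_at phi x) ->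
  comb_subdiff2 phi xbar 0 w z -> 0 <= dotv z w.
Proof.
move=> phi_neqNy xbar_fin [dm [dm_gt0 xbar_min]] [dl dl_gt0 phi_lsc] z_in.
rewrite leNgt; apply/negP => zw_lt0; have zz_ge0 := dotvv_ge0 z.
set lam := - dotv z w / (2 * (dotv z z + 1)).
have lam_gt0 : 0 < lam by rewrite divr_gt0 //; lra.
have min_gt0 : 0 < Num.min dm dl by rewrite lt_min dm_gt0.
have min_le_dm : Num.min dm dl <= dm by rewrite ge_min lexx.
have min_le_dl : Num.min dm dl <= dl by rewrite ge_min lexx orbT.
have := graph_normal_dotv_ge0 phi_neqNy xbar_fin min_gt0
  (fun x x_near => xbar_min x (lt_le_trans x_near min_le_dm))
  (fun x x_near => phi_lsc x (lt_le_trans x_near min_le_dl)) lam_gt0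
  (comb_subdiff2_normal_ineq z_in).
have : lam * (dotv z z + 1) = - dotv z w / 2 by rewrite /lam; field; lra.
rewrite dotvDr dotvZr; nra.
Qed.

Theorem theorem4p3 (R : realType) (n : nat) (phi : 'rV[R]_n -> \bar R)
  (xbar : 'rV[R]_n) :
  (forall x, phi x != -oo%E) ->
  phi xbar \is a fin_num ->
  local_minimizer phi xbar ->
  lim_subdiff phi xbar 0 /\
  (prox_regular phi xbar 0 ->
   forall w z : 'rV[R]_n, comb_subdiff2 phi xbar 0 w z -> 0 <= dotv z w).
Proof.
move=> phi_neqNy xbar_fin xbar_min; split.
  exact/reg_subdiff_lim_subdiff/local_minimizer_reg_subdiff0.
move=> [_ [[d [d_gt0 phi_lsc]] _]] w z.
by apply: local_minimizer_comb_subdiff2_ge0 => //; exists d.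
Qed.
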